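(* Let $\theta_0\in\mathbb{R}$ and let $\hat\theta_u,\hat\theta_b$ be real random variables with finite second moments such that $\mathbb{E}[\hat\theta_u]=\theta_0$ and $\mathbb{E}[\hat\theta_b]=\theta_0+\mu$ for some (arbitrary) $\mu\in\mathbb{R}$. Write $\sigma^2_u=\mathrm{Var}(\hat\theta_u)$, $\sigma^2_b=\mathrm{Var}(\hat\theta_b)$, $\sigma_{bu}=\mathrm{Cov}(\hat\theta_b,\hat\theta_u)$, and assume $\sigma^2_u>0$ and $\sigma^2_u+\sigma^2_b-2\sigma_{bu}>0$. Let $\hat\sigma^2_u,\hat\sigma^2_b,\hat\sigma_{bu}$ be real random variables (on the same probability space) with bounded second moments and satisfying $\hat\sigma^2_u+\hat\sigma^2_b-2\hat\sigma_{bu}>0$ almost surely. Define $$\hat\lambda=\frac{\hat\sigma^2_u-\hat\sigma_{bu}}{(\hat\theta_u-\hat\theta_b)^2+\hat\sigma^2_u+\hat\sigma^2_b-2\hat\sigma_{bu}},\qquad \hat\theta_{\hat\lambda}=\hat\lambda\hat\theta_b+(1-\hat\lambda)\hat\theta_u.$$ Then $$\mathbb{E}\big[(\hat\theta_{\hat\lambda}-\theta_0)^2\big]\le\left(\sigma_u+\frac12\sqrt{\mathbb{E}[S^2]}\right)^2,\qquad\text{where } \mathbb{E}[S^2]=\mathbb{E}\!\left[\frac{(\hat\sigma^2_u-\hat\sigma_{bu})^2}{\hat\sigma^2_u+\hat\sigma^2_b-2\hat\sigma_{bu}}\right].$$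
   Context: $\hat\theta_u$ is an unbiased estimator of $\theta_0$, $\hat\theta_b$ a possibly biased estimator with unknown bias $\mu$, and $\hat\sigma^2_u,\hat\sigma^2_b,\hat\sigma_{bu}$ are estimators of $\mathrm{Var}(\hat\theta_u),\mathrm{Var}(\hat\theta_b),\mathrm{Cov}(\hat\theta_b,\hat\theta_u)$. $\sigma_u=\sqrt{\sigma^2_u}$. *)

From mathcomp Require Import all_boot all_order all_algebra.
From mathcomp Require Import all_classical all_reals all_analysis.
Set Implicit Arguments. Unset Strict Implicit. Unset Printing Implicit Defensive.
Import Order.TTheory GRing.Theory Num.Theory.
Local Open Scope ring_scope.

Definition lambda_hat (T : Type) (R : realType) (tu tb s2u s2b sbu : T -> R)
  : T -> R :=
  fun w => (s2u w - sbu w) /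
           ((tu w - tb w) ^+ 2 + s2u w + s2b w - 2 * sbu w).

Definition theta_lambda (T : Type) (R : realType) (tu tb s2u s2b sbu : T -> R)
  : T -> R :=
  fun w => lambda_hat tu tb s2u s2b sbu w * tb w
           + (1 - lambda_hat tu tb s2u s2b sbu w) * tu w.

Definition S2 (T : Type) (R : realType) (s2u s2b sbu : T -> R) : T -> R :=
  fun w => (s2u w - sbu w) ^+ 2 / (s2u w + s2b w - 2 * sbu w).

From mathcomp Require Import all_boot all_order all_algebra.
From mathcomp Require Import all_classical all_reals all_analysis.
From mathcomp Require Import ring measurable_realfun.
Set Implicit Arguments. Unset Strict Implicit. Unset Printing Implicit Defensive.
Import Order.TTheory GRing.Theory Num.Theory.
Local Open Scope ring_scope.

(** Write [e = tu - theta0], [D = tu - tb], [A = s2u - sbu] and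
    [B = s2u + s2b - 2 sbu > 0].  Pointwise, [theta_lambda - theta0 = e - y]
    with [y = A D / (D^2 + B)], and [D^2 + B >= 2 |D| sqrt B] gives
    [y^2 <= A^2 / (4 B) = S2 / 4].  For every [t > 0],
    [(e - y)^2 <= (1 + t) e^2 + (1 + 1/t) y^2]; taking expectations, with
    [E[e^2] = Var tu] because [tu] is unbiased, and choosing
    [t = sqrt E[S2] / (2 sigma_u)] gives the bound. *)

Lemma sqrrB_le (R : realFieldType) (x y t : R) : 0 < t ->
  (x - y) ^+ 2 <= (1 + t) * x ^+ 2 + (1 + t^-1) * y ^+ 2.
Proof.
move=> t0; rewrite -subr_ge0.
have -> : (1 + t) * x ^+ 2 + (1 + t^-1) * y ^+ 2 - (x - y) ^+ 2 =
    t^-1 * (t * x + y) ^+ 2 by field; rewrite gt_eqF.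
by rewrite mulr_ge0 ?sqr_ge0 // invr_ge0 ltW.
Qed.

Lemma sqr_shrinkage_le (R : realFieldType) (a d b : R) : 0 < b ->
  (a / (d ^+ 2 + b) * d) ^+ 2 <= a ^+ 2 / (4 * b).
Proof.
move=> b0; have db0 : 0 < d ^+ 2 + b by rewrite ltr_wpDl ?sqr_ge0.
rewrite -subr_ge0.
have -> : a ^+ 2 / (4 * b) - (a / (d ^+ 2 + b) * d) ^+ 2 =
    (a * (d ^+ 2 - b)) ^+ 2 / (4 * b * (d ^+ 2 + b) ^+ 2).
  by field; rewrite !gt_eqF.
by rewrite divr_ge0 ?sqr_ge0 // mulr_ge0 ?sqr_ge0 // mulr_ge0 // ltW.
Qed.

Lemma le_sqr_sqrtD_half (R : rcfType) (v c l : R) : 0 < v -> 0 <= c ->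
  (forall t, 0 < t -> l <= (1 + t) * v + (1 + t^-1) / 4 * c) ->
  l <= (Num.sqrt v + 2^-1 * Num.sqrt c) ^+ 2.
Proof.
move=> v0 c0 lle; set a := Num.sqrt v; set s := Num.sqrt c.
have a0 : 0 < a by rewrite sqrtr_gt0.
have va : v = a ^+ 2 by rewrite sqr_sqrtr ?ltW.
have cs : c = s ^+ 2 by rewrite sqr_sqrtr.
have [s0|] := ltP 0 s.
  have := lle (s / (2 * a)) (divr_gt0 s0 (mulr_gt0 (ltr0Sn _ 1) a0)).
  rewrite va cs => /le_trans; apply; rewrite le_eqVlt; apply/orP; left.
  by apply/eqP; field; rewrite !gt_eqF.
rewrite le_eqVlt ltNge sqrtr_ge0 orbF => /eqP s0.
have c00 : c = 0 by rewrite cs s0 expr0n.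
rewrite s0 mulr0 addr0 -va; apply/ler_addgt0Pr => e e0.
have := lle (e / v) (divr_gt0 e0 v0); rewrite c00 mulr0 addr0.
by rewrite mulrDl mul1r mulfVK ?gt_eqF.
Qed.

Lemma sqr_theta_lambda_le (T : Type) (R : realType) (tu tb s2u s2b sbu : T -> R)
    (theta0 t : R) (w : T) :
  0 < s2u w + s2b w - 2 * sbu w -> 0 < t ->
  (theta_lambda tu tb s2u s2b sbu w - theta0) ^+ 2 <=
  (1 + t) * (tu w - theta0) ^+ 2 + (1 + t^-1) / 4 * S2 s2u s2b sbu w.
Proof.
move=> B0 t0.
set D := tu w - tb w; set A := s2u w - sbu w; set B := s2u w + s2b w - 2 * sbu w.
have lamE : lambda_hat tu tb s2u s2b sbu w = A / (D ^+ 2 + B) by rewrite /B !addrA.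
have -> : theta_lambda tu tb s2u s2b sbu w - theta0 =
    (tu w - theta0) - A / (D ^+ 2 + B) * D.
  by rewrite /theta_lambda lamE /D; ring.
apply: (le_trans (sqrrB_le _ _ t0)); rewrite lerD2l.
have -> : (1 + t^-1) / 4 * S2 s2u s2b sbu w = (1 + t^-1) * (A ^+ 2 / (4 * B)).
  by rewrite /S2 -/A -/B; field; rewrite !gt_eqF.
by rewrite ler_wpM2l ?sqr_shrinkage_le // addr_ge0 // invr_ge0 ltW.
Qed.

Lemma measurable_inv (R : realType) : measurable_fun [set: R] GRing.inv.
Proof.
have mC0 : measurable (~` [set (0 : R)]) by exact: measurableC.
have : measurable_fun (~` [set (0 : R)]) GRing.inv.
  apply: open_continuous_measurable_fun.
    exact/closed_openC/accessible_closed_set1/hausdorff_accessible.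
  by move=> x; rewrite inE => /eqP x0; exact: inv_continuous.
(* off [0] it is continuous; at [0] both sides take the junk value [0^-1 = 0] *)
move/(measurable_restrictT _ mC0); apply: eq_measurable_fun => x _.
rewrite patchE; case: ifPn => // /negP; rewrite inE /= => /contrapT ->.
by rewrite invr0.
Qed.

Section measurable_estimators.
Context d (T : measurableType d) (R : realType).
Variables tu tb s2u s2b sbu : T -> R.
Hypotheses (mtu : measurable_fun setT tu) (mtb : measurable_fun setT tb).
Hypotheses (ms2u : measurable_fun setT s2u) (ms2b : measurable_fun setT s2b).
Hypothesis msbu : measurable_fun setT sbu.

Lemma measurable_lambda_hat : measurable_fun setT (lambda_hat tu tb s2u s2b sbu).
Proof.
apply: measurable_funM; first exact: measurable_funB.
apply: measurableT_comp; first exact: measurable_inv.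
apply: measurable_funB; last exact: measurable_funM.
by apply: measurable_funD => //; apply: measurable_funD => //;
  apply/measurable_funX/measurable_funB.
Qed.

Lemma measurable_theta_lambda : measurable_fun setT (theta_lambda tu tb s2u s2b sbu).
Proof.
apply: measurable_funD; apply: measurable_funM => //; first exact: measurable_lambda_hat.
exact/measurable_funB/measurable_lambda_hat.
Qed.

Lemma measurable_S2 : measurable_fun setT (S2 s2u s2b sbu).
Proof.
apply: measurable_funM; first exact/measurable_funX/measurable_funB.
apply: measurableT_comp; first exact: measurable_inv.
by apply: measurable_funB; [exact: measurable_funD | exact: measurable_funM].
Qed.

End measurable_estimators.

Local Open Scope ereal_scope.

Lemma lee_sqr_sqrteD_half (R : realType) (v : R) (x c : \bar R) :
  (0 < v)%R -> 0 <= c ->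
  (forall t : R, (0 < t)%R -> x <= (1 + t)%:E * v%:E + ((1 + t^-1) / 4)%:E * c) ->
  x <= (sqrte v%:E + 2^-1%:E * sqrte c) ^+ 2.
Proof.
move=> v0; case: c => [c | | ] c0 xle; last by rewrite leeNy_eq in c0.
  case: x xle => [l | | ] xle; last exact: leNye.
    rewrite [sqrte _]/= [sqrte c%:E]/= -EFinM -EFinD -EFin_expe lee_fin.
    (* sums and products of finite extended reals compute, so [xle] is real *)
    by apply: le_sqr_sqrtD_half.
  by have := xle 1%R ltr01; rewrite leye_eq.
by rewrite [sqrte +oo]/= gt0_muley ?lte_fin ?invr_gt0 // addey //= mulyy leey.
Qed.

Section expectation_lemmas.
Context d (T : measurableType d) (R : realType) (P : probability T R).

Lemma ae_eq_expectation (X Y : T -> R) :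
  measurable_fun setT X -> measurable_fun setT Y ->
  {ae P, forall w, X w = Y w} -> 'E_P[X] = 'E_P[Y].
Proof.
move=> mX mY XY; rewrite unlock; apply: ae_eq_integral => //;
  [exact: measurableT_comp | exact: measurableT_comp |].
by apply: filterS XY => w ->.
Qed.

Lemma ge0_expectationDZ (a b : R) (X Y : T -> R) : (0 <= a)%R -> (0 <= b)%R ->
  measurable_fun setT X -> measurable_fun setT Y ->
  (forall w, 0 <= X w)%R -> (forall w, 0 <= Y w)%R ->
  'E_P[fun w => (a * X w + b * Y w)%R] = a%:E * 'E_P[X] + b%:E * 'E_P[Y].
Proof.
move=> a0 b0 mX mY X0 Y0; rewrite unlock.
under eq_integral do rewrite EFinD !EFinM.
rewrite ge0_integralD //; last 4 first.
- by move=> w _; rewrite mule_ge0 ?lee_fin.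
- exact/measurable_funeM/measurableT_comp.
- by move=> w _; rewrite mule_ge0 ?lee_fin.
- exact/measurable_funeM/measurableT_comp.
rewrite !ge0_integralZl_EFin //; last 2 first.
- by move=> w _; rewrite lee_fin.
- exact: measurableT_comp.
- by move=> w _; rewrite lee_fin.
- exact: measurableT_comp.
Qed.

Lemma variance_sqr_centered (X : T -> R) (m : R) : 'E_P[X] = m%:E ->
  'V_P[X] = 'E_P[fun w => ((X w - m) ^+ 2)%R].
Proof.
move=> EX; rewrite /variance covariance.unlock EX /=.
by congr expectation; apply/funext => w; rewrite expr2.
Qed.

End expectation_lemmas.

Section theta_lambda_risk.
Context d (T : measurableType d) (R : realType) (P : probability T R).
Variables (theta0 : R) (tu tb s2u s2b sbu : T -> R).
Hypotheses (mtu : measurable_fun setT tu) (mtb : measurable_fun setT tb).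
Hypotheses (ms2u : measurable_fun setT s2u) (ms2b : measurable_fun setT s2b).
Hypothesis msbu : measurable_fun setT sbu.
Hypothesis denom_gt0 : {ae P, forall w, (0 < s2u w + s2b w - 2 * sbu w)%R}.

(* [S2] is nonnegative only almost surely, while the integral calculus for
   nonnegative functions needs nonnegativity everywhere. *)
Let S2_ge0 w := Num.max (S2 s2u s2b sbu w) 0%R.

Let measurable_S2_ge0 : measurable_fun setT S2_ge0.
Proof. exact/measurable_maxr/measurable_cst/measurable_S2. Qed.

Lemma expectation_S2E : 'E_P[S2 s2u s2b sbu] = 'E_P[S2_ge0].
Proof.
apply: ae_eq_expectation => //; first exact: measurable_S2.
apply: filterS denom_gt0 => w B0; rewrite /S2_ge0 max_l //.
by rewrite divr_ge0 ?sqr_ge0 ?ltW.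
Qed.

Lemma expectation_S2_ge0 : 0 <= 'E_P[S2 s2u s2b sbu].
Proof. by rewrite expectation_S2E expectation_ge0 // => w; rewrite le_max lexx orbT. Qed.

Lemma expectation_sqr_theta_lambda_le (t : R) : (0 < t)%R -> 'E_P[tu] = theta0%:E ->
  'E_P[fun w => ((theta_lambda tu tb s2u s2b sbu w - theta0) ^+ 2)%R]
    <= (1 + t)%:E * 'V_P[tu] + ((1 + t^-1) / 4)%:E * 'E_P[S2 s2u s2b sbu].
Proof.
move=> t0 Etu.
have t1 : (0 <= 1 + t)%R by rewrite addr_ge0 // ltW.
have k0 : (0 <= (1 + t^-1) / 4 :> R)%R by rewrite divr_ge0 // addr_ge0 // invr_ge0 ltW.
have dev0 w : (0 <= (tu w - theta0) ^+ 2)%R by exact: sqr_ge0.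
have S0 w : (0 <= S2_ge0 w)%R by rewrite le_max lexx orbT.
have msqr_dev (X : T -> R) : measurable_fun setT X ->
    measurable_fun setT (fun w => ((X w - theta0) ^+ 2)%R).
  by move=> mX; exact/measurable_funX/measurable_funB.
rewrite (variance_sqr_centered Etu) expectation_S2E -ge0_expectationDZ //;
  last exact: msqr_dev.
apply: expectation_le.
- exact/msqr_dev/measurable_theta_lambda.
- apply: measurable_funD; apply: measurable_funM.
  + exact: measurable_cst.
  + exact: msqr_dev.
  + exact: measurable_cst.
  + exact: measurable_S2_ge0.
- by move=> w; exact: sqr_ge0.
- by move=> w; rewrite addr_ge0 // mulr_ge0.
apply: filterS denom_gt0 => w B0.
apply: le_trans (sqr_theta_lambda_le tu tb theta0 B0 t0) _.
by rewrite lerD2l ler_wpM2l // le_max lexx.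
Qed.

End theta_lambda_risk.

Theorem theorem3 (d : measure_display) (T : measurableType d) (R : realType)
  (P : probability T R) (theta0 mu : R)
  (tu tb s2u s2b sbu : T -> R) :
  tu \in Lfun P 2%:E -> tb \in Lfun P 2%:E ->
  'E_P[tu] = theta0%:E ->
  'E_P[tb] = (theta0 + mu)%:E ->
  0 < 'V_P[tu] ->
  0 < 'V_P[tu] + 'V_P[tb] - 2%:E * covariance P tb tu ->
  s2u \in Lfun P 2%:E -> s2b \in Lfun P 2%:E -> sbu \in Lfun P 2%:E ->
  {ae P, forall w, (0 < s2u w + s2b w - 2 * sbu w)%R} ->
  'E_P[(fun w => (theta_lambda tu tb s2u s2b sbu w - theta0) ^+ 2)%R]
    <= (sqrte 'V_P[tu] + 2^-1%:E * sqrte 'E_P[S2 s2u s2b sbu]) ^+ 2.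
Proof.
move=> Ltu Ltb Etu _ V0 _ Ls2u Ls2b Lsbu denom_gt0.
have mL (X : T -> R) : X \in Lfun P 2%:E -> measurable_fun setT X.
  by move/sub_Lfun_mfun; rewrite inE.
move: (mL _ Ltu) (mL _ Ltb) (mL _ Ls2u) (mL _ Ls2b) (mL _ Lsbu).
move=> mtu mtb ms2u ms2b msbu.
have /fineK VE := variance_fin_num Ltu.
rewrite -VE in V0 *.
apply: lee_sqr_sqrteD_half; first by rewrite -lte_fin.
  exact: expectation_S2_ge0 ms2u ms2b msbu denom_gt0.
move=> t t0; rewrite VE.
exact: (expectation_sqr_theta_lambda_le mtu mtb ms2u ms2b msbu denom_gt0 t0 Etu).
Qed.
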